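(* Let $N=\{1,\ldots,n\}$, let $\mathscr{B}\in\mathfrak{B}^*(n)$ and let $\mathscr{F}=\{v\in\mathscr{BG}(n):\sum_{S\in\mathscr{B}}\lambda^{\mathscr{B}}_Sv(S)=v(N)\}$ be the corresponding facet of $\mathscr{BG}(n)$. Then: (1) if $|\mathscr{B}|=n$, every game in $\mathscr{F}$ has a core reduced to a single point; (2) otherwise, no game in the relative interior of $\mathscr{F}$ has a core reduced to a single point.
   Context: A game on $N$ is a map $v:2^N\to\mathbb{R}$ with $v(\varnothing)=0$, identified with a vector in $\mathbb{R}^{2^N\setminus\{\varnothing\}}$. The core is $C(v)=\{x\in\mathbb{R}^N:\sum_{i\in S}x_i\geqslant v(S)\ \forall S\subseteq N,\ \sum_{i\in N}x_i=v(N)\}$. A collection $\mathscr{B}$ of nonempty subsets of $N$ is balanced if there exist positive weights $(\lambda_S)_{S\in\mathscr{B}}$ with $\sum_{S\in\mathscr{B},S\ni i}\lambda_S=1$ for all $i\in N$; minimal balanced if no proper subcollection is balanced, with unique weights $\lambda^{\mathscr{B}}_S$. $\mathfrak{B}^*(n)$ is the set of minimal balanced collections other than $\{N\}$. $\mathscr{BG}(n)=\{v:\sum_{S\in\mathscr{B}}\lambda^{\mathscr{B}}_Sv(S)\leqslant v(N)\ \forall\mathscr{B}\in\mathfrak{B}^*(n)\}$ is the cone of balanced games (those with nonempty core). *)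

From mathcomp Require Import all_boot all_order all_algebra.
Set Implicit Arguments. Unset Strict Implicit. Unset Printing Implicit Defensive.
Import Order.TTheory GRing.Theory Num.Theory.
Local Open Scope ring_scope.

(* N = 'I_n ; a game is a vector indexed by subsets of N, with v(set0) = 0 *)
Definition game (R : realFieldType) (n : nat) := {ffun {set 'I_n} -> R}.

Definition balancing_weights (R : realFieldType) (n : nat)
  (B : {set {set 'I_n}}) (lam : {set 'I_n} -> R) : Prop :=
  (forall S, S \in B -> 0 < lam S) /\
  (forall i : 'I_n, \sum_(S in B | i \in S) lam S = 1).

Definition balanced (R : realFieldType) (n : nat) (B : {set {set 'I_n}}) : Prop :=
  set0 \notin B /\ exists lam : {set 'I_n} -> R, balancing_weights B lam.

Definition minimal_balanced (R : realFieldType) (n : nat) (B : {set {set 'I_n}}) : Prop :=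
  balanced R B /\ forall C : {set {set 'I_n}}, C \proper B -> ~ balanced R C.

Definition Bstar (R : realFieldType) (n : nat) (B : {set {set 'I_n}}) : Prop :=
  minimal_balanced R B /\ B != [set [set: 'I_n]].

(* the cone BG(n) of balanced games; weights of minimal balanced collections
   are unique, so quantifying over all balancing weights is the same as using
   lambda^B *)
Definition BG (R : realFieldType) (n : nat) (v : game R n) : Prop :=
  v set0 = 0 /\
  forall (B : {set {set 'I_n}}) (lam : {set 'I_n} -> R),
    Bstar R B -> balancing_weights B lam ->
    \sum_(S in B) lam S * v S <= v [set: 'I_n].

Definition facet (R : realFieldType) (n : nat) (B : {set {set 'I_n}})
  (lam : {set 'I_n} -> R) (v : game R n) : Prop :=
  BG v /\ \sum_(S in B) lam S * v S = v [set: 'I_n].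

Definition in_core (R : realFieldType) (n : nat) (v : game R n)
  (x : {ffun 'I_n -> R}) : Prop :=
  (forall S : {set 'I_n}, v S <= \sum_(i in S) x i) /\
  \sum_(i in [set: 'I_n]) x i = v [set: 'I_n].

Definition core_single_point (R : realFieldType) (n : nat) (v : game R n) : Prop :=
  exists x : {ffun 'I_n -> R}, forall y, in_core v y <-> y = x.

Definition in_aff_hull (R : realFieldType) (n : nat) (P : game R n -> Prop)
  (w : game R n) : Prop :=
  exists (m : nat) (c : 'I_m -> R) (u : 'I_m -> game R n),
    (forall k, P (u k)) /\ \sum_(k < m) c k = 1 /\
    (forall S, w S = \sum_(k < m) c k * u k S).

Definition rel_interior (R : realFieldType) (n : nat) (P : game R n -> Prop)
  (v : game R n) : Prop :=
  P v /\ exists eps : R, 0 < eps /\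
    forall w, in_aff_hull P w -> (forall S, `|w S - v S| < eps) -> P w.

(* A game v of BG(n) satisfies sum_S w_S v(S) <= v(N) for every balanced
   collection D with weights w, not only for the minimal ones: if D is not
   minimal, its weights are a convex combination of the weights of a smaller
   balanced subcollection and of a proper subcollection obtained by moving
   along the difference until one weight vanishes.  The indicator vectors of a
   minimal balanced collection are linearly independent, so |B| <= n.

   If |B| = n these vectors form a basis: exactly one x has x(T) = v(T) for
   T in B, every core element is tight on B and hence equals x, and x lies in
   the core because for S outside B the collection B + {S} is balanced, so the
   inequality above at the tight payoff x reads v(S) <= x(S).

   If |B| < n and x is the only core element, apply a Gordan-type alternative
   to the kernel of the indicator vectors of B and to the coalitions outside B
   that are tight at x.  Either some nonzero direction of the kernel moves x
   inside the core, or these tight coalitions together with B form a balanced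
   collection.  In the second case raising v at one of them keeps v in the
   facet, since v is relatively interior, but makes the balanced inequality at
   x fail. *)

From mathcomp Require Import all_boot all_order all_algebra.
From mathcomp Require Import ring.
From Stdlib Require Import Classical.
Import Order.TTheory GRing.Theory Num.Theory.
Set Implicit Arguments. Unset Strict Implicit. Unset Printing Implicit Defensive.
Local Open Scope ring_scope.

Section BalancedGames.
Variables (R : realFieldType) (n : nat).
Implicit Types (B C D W : {set {set 'I_n}}) (S T : {set 'I_n}).
Implicit Types (w wD lam mu : {set 'I_n} -> R) (x y : {ffun 'I_n -> R}).

(** * Indicator vectors and balanced collections *)

Definition chi S : 'rV[R]_n := \row_i (i \in S)%:R.

Definition dot (u : 'rV[R]_n) (d : 'cV[R]_n) : R := (u *m d) 0 0.

Lemma dot_chi S d : dot (chi S) d = \sum_(i in S) d i 0.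
Proof.
rewrite /dot mxE [RHS]big_mkcond /=; apply: eq_bigr => i _; rewrite mxE.
by case: (i \in S); rewrite ?mul1r ?mul0r.
Qed.

Lemma dot_chi_col S x : dot (chi S) (\col_i x i) = \sum_(i in S) x i.
Proof. by rewrite dot_chi; apply: eq_bigr => i _; rewrite mxE. Qed.

Lemma dotDl u1 u2 d : dot (u1 + u2) d = dot u1 d + dot u2 d.
Proof. by rewrite /dot mulmxDl mxE. Qed.

Lemma dotZl c u d : dot (c *: u) d = c * dot u d.
Proof. by rewrite /dot -scalemxAl mxE. Qed.

Lemma dotNr u d : dot u (- d) = - dot u d.
Proof. by rewrite /dot mulmxN mxE. Qed.

Lemma dot_suml (I : finType) (P : pred I) (c : I -> R) (a : I -> 'rV[R]_n) d :
  dot (\sum_(k | P k) c k *: a k) d = \sum_(k | P k) c k * dot (a k) d.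
Proof.
rewrite /dot mulmx_suml summxE; apply: eq_bigr => k _.
by rewrite -scalemxAl mxE.
Qed.

Lemma dot_mulmx_ker m (M : 'M[R]_(m, n)) u d : M *m d = 0 -> dot (u *m M) d = 0.
Proof. by move=> Md; rewrite /dot -mulmxA Md mulmx0 mxE. Qed.

Lemma sum_scale_delta (I : finType) (F : I -> 'rV[R]_n) k0 :
  \sum_k (k == k0)%:R *: F k = F k0.
Proof.
rewrite (bigD1 k0) //= eqxx scale1r big1 ?addr0 // => k /negbTE->.
by rewrite scale0r.
Qed.

Lemma sum_setT x : \sum_(i in [set: 'I_n]) x i = \sum_i x i.
Proof. by apply: eq_bigl => i; rewrite in_setT. Qed.

Lemma sum_chiE D (c : {set 'I_n} -> R) i :
  (\sum_(S in D) c S *: chi S) 0 i = \sum_(S in D | i \in S) c S.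
Proof.
rewrite summxE big_mkcondr /=; apply: eq_bigr => S _; rewrite !mxE.
by case: (i \in S); rewrite ?mulr1 ?mulr0.
Qed.

Lemma balancing_chi D w :
  balancing_weights D w -> \sum_(S in D) w S *: chi S = chi [set: 'I_n].
Proof. by move=> [_ wsum]; apply/rowP => i; rewrite sum_chiE wsum !mxE in_setT. Qed.

Lemma sum_chi_balancing D w : (forall S, S \in D -> 0 < w S) ->
  \sum_(S in D) w S *: chi S = chi [set: 'I_n] -> balancing_weights D w.
Proof. by move=> w_gt0 wchi; split=> // i; rewrite -sum_chiE wchi !mxE in_setT. Qed.

Lemma balancing_sum D w x : balancing_weights D w ->
  \sum_(S in D) w S * (\sum_(i in S) x i) = \sum_i x i.
Proof.
move=> [_ wsum].
transitivity (\sum_(S in D) \sum_i (if i \in S then w S * x i else 0)).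
  apply: eq_bigr => S _; rewrite mulr_sumr big_mkcond /=.
  by apply: eq_bigr => i _; case: (i \in S).
rewrite exchange_big /=; apply: eq_bigr => i _.
by rewrite -big_mkcondr -mulr_suml wsum mul1r.
Qed.

Lemma ratio_test (X : finType) (D : {set X}) (w c : X -> R) :
  (forall k, k \in D -> 0 < w k) -> (exists2 k, k \in D & c k < 0) ->
  exists s, [/\ 0 < s, forall k, k \in D -> 0 <= w k + s * c k &
    exists2 k0, k0 \in D & w k0 + s * c k0 = 0].
Proof.
move=> w_gt0 [k1 k1D ck1].
have Pk1 : (k1 \in D) && (c k1 < 0) by rewrite k1D ck1.
have [k0 /andP[k0D ck0] k0min] :=
  arg_minP (P := fun k => (k \in D) && (c k < 0)) (fun k => w k / - c k) Pk1.
have nck0 : 0 < - c k0 by rewrite oppr_gt0.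
exists (w k0 / - c k0); split.
- by rewrite divr_gt0 // w_gt0.
- move=> k kD; case: (ltrP (c k) 0) => ck; last first.
    by rewrite addr_ge0 ?mulr_ge0 ?invr_ge0 ?(ltW (w_gt0 _ _)) // ltW.
  have := k0min k; rewrite kD ck => /(_ isT).
  by rewrite ler_pdivlMr ?oppr_gt0 // mulrN -subr_ge0 opprK.
- by exists k0; rewrite // invrN mulrN mulNr -mulrA mulVf ?mulr1 ?subrr ?lt_eqF.
Qed.

Lemma sum_support (X : finType) (D : {set X}) (f g : X -> R) :
  (forall k, f k = 0 -> g k = 0) ->
  \sum_(k in [set k in D | f k != 0]) g k = \sum_(k in D) g k.
Proof.
move=> fg; rewrite big_mkcond [RHS]big_mkcond /=; apply: eq_bigr => k _.
by rewrite inE; case: (k \in D) (eqVneq (f k) 0) => [] // [/fg|].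
Qed.

Lemma shifted_sum D w c t s i : balancing_weights D w ->
  (forall i, \sum_(S in D | i \in S) c S = t) ->
  \sum_(S in D | i \in S) (w S + s * c S) = 1 + s * t.
Proof. by move=> [_ wsum] csum; rewrite big_split /= wsum -mulr_sumr csum. Qed.

Lemma balancing_shift D w c t s : balancing_weights D w ->
  (forall i, \sum_(S in D | i \in S) c S = t) -> 0 < 1 + s * t ->
  (forall S, S \in D -> 0 <= w S + s * c S) ->
  balancing_weights [set S in D | w S + s * c S != 0]
    (fun S => (w S + s * c S) / (1 + s * t)).
Proof.
move=> Dw csum st_gt0 ge0; split=> [S | i].
  by rewrite inE => /andP[SD nz]; rewrite divr_gt0 // lt_def nz ge0.
rewrite big_mkcondr sum_support => [|S ->]; last by rewrite mul0r; case: ifP.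
by rewrite -big_mkcondr -mulr_suml (shifted_sum _ _ Dw csum) divff // gt_eqF.
Qed.

Lemma minimal_balanced_free B (c : {set 'I_n} -> R) : minimal_balanced R B ->
  \sum_(T in B) c T *: chi T = 0 -> forall T, T \in B -> c T = 0.
Proof.
move=> [[B0 [lam Blam]] Bmin].
have no_neg c' : \sum_(T in B) c' T *: chi T = 0 ->
    ~ exists2 T, T \in B & c' T < 0.
  move=> c'0 /(ratio_test Blam.1) [s [s_gt0 ge0 [T0 T0B T00]]].
  have c'sum i : \sum_(T in B | i \in T) c' T = 0 by rewrite -sum_chiE c'0 mxE.
  apply: (Bmin [set T in B | lam T + s * c' T != 0]).
    apply/properP; split; first by apply/subsetP => T; rewrite inE => /andP[].
    by exists T0; rewrite // inE T0B T00 eqxx.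
  split; first by rewrite inE negb_and B0.
  exists (fun T => (lam T + s * c' T) / (1 + s * 0)).
  by apply: balancing_shift; rewrite // mulr0 addr0 ltr01.
move=> c0 T TB; case: (ltrgtP (c T) 0) => // cT; exfalso.
  by apply: (no_neg c) => //; exists T.
apply: (no_neg (fun T => - c T)); last by exists T; rewrite ?oppr_lt0.
rewrite (eq_bigr (fun T => - (c T *: chi T))) => [|S _]; last by rewrite scaleNr.
by rewrite sumrN c0 oppr0.
Qed.

Lemma balanced_extension B lam W mu (a : {set 'I_n} -> R) :
  balancing_weights B lam -> [disjoint W & B] -> (forall S, S \in W -> 0 < mu S) ->
  \sum_(S in W) mu S *: chi S = \sum_(T in B) a T *: chi T ->
  exists wD, balancing_weights (W :|: B) wD.
Proof.
move=> Blam WB mu_gt0 muB.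
have ratio_ge0 T : T \in B -> 0 <= `|a T| / lam T.
  by move=> TB; rewrite divr_ge0 // ltW // Blam.1.
pose t := 1 + \sum_(T in B) `|a T| / lam T.
have t_gt0 : 0 < t by rewrite ltr_pwDl ?sumr_ge0.
have BW S : S \in B -> S \notin W by move=> SB; rewrite (disjointFl WB SB).
(* Trading the weights [a / t] on B for [mu / t] on W leaves the weighted sum
   of indicator vectors equal to [chi N]; t is large enough for the weights on
   B to stay positive. *)
exists (fun S => if S \in W then mu S / t else lam S - a S / t).
apply: sum_chi_balancing => [S | ].
  rewrite inE; case: ifP => [SW _ | _ /= SB]; first by rewrite divr_gt0 ?mu_gt0.
  rewrite subr_gt0 ltr_pdivrMr // (le_lt_trans (ler_norm _)) //.
  rewrite -ltr_pdivrMl ?Blam.1 // mulrC ltr_pwDl // (bigD1 S) //= lerDl.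
  by apply: sumr_ge0 => T /andP[TB _]; apply: ratio_ge0.
have sumU (F : {set 'I_n} -> 'rV[R]_n) :
    \sum_(S in W :|: B) F S = \sum_(S in W) F S + \sum_(S in B) F S.
  by rewrite (eq_bigl [predU W & B]) ?bigU // => S; rewrite !inE.
rewrite sumU (eq_bigr (fun S => t^-1 *: (mu S *: chi S))) => [|S SW]; last first.
  by rewrite SW scalerA mulrC.
rewrite [X in _ + X](eq_bigr (fun S => lam S *: chi S - t^-1 *: (a S *: chi S))).
  by rewrite sumrB -!scaler_sumr muB (balancing_chi Blam) addrC subrK.
by move=> S SB; rewrite (negbTE (BW _ SB)) scalerBl scalerA mulrC.
Qed.

Hypothesis n_gt0 : (0 < n)%N.

Lemma balancing_neq0 D w : balancing_weights D w -> D != set0.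
Proof.
move=> [_ wsum]; apply/eqP => D0.
move/eqP: (wsum (Ordinal n_gt0)); rewrite big_mkcond big1 => [|S _].
  by rewrite eq_sym oner_eq0.
by rewrite D0 inE.
Qed.

Lemma balanced_split D w C mu : set0 \notin D -> balancing_weights D w ->
  C \proper D -> balancing_weights C mu ->
  exists s w2 D', [/\ 0 < s < 1, D' \proper D, balancing_weights D' w2 &
    forall g : {set 'I_n} -> R, \sum_(S in D) w S * g S =
      (1 - s) * \sum_(S in D') w2 S * g S + s * \sum_(S in C) mu S * g S].
Proof.
move=> D0 Dw CD Cmu; have CsubD := proper_sub CD.
pose mu' S := if S \in C then mu S else 0.
have mu'_sum i : \sum_(S in D | i \in S) - mu' S = -1.
  rewrite sumrN -(Cmu.2 i) big_mkcond [in RHS]big_mkcond /=; congr (- _).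
  apply: eq_bigr => S _; rewrite /mu'; case SC: (S \in C) => /=; last by case: ifP.
  by rewrite (subsetP CsubD _ SC).
have mu'_val g : \sum_(S in D) mu' S * g S = \sum_(S in C) mu S * g S.
  rewrite big_mkcond [RHS]big_mkcond /=; apply: eq_bigr => S _.
  rewrite /mu'; case SC: (S \in C); last by rewrite mul0r; case: ifP.
  by rewrite (subsetP CsubD _ SC).
have neg : exists2 S, S \in D & - mu' S < 0.
  have /set0Pn [S1 S1C] := balancing_neq0 Cmu.
  by exists S1; rewrite ?(subsetP CsubD) // /mu' S1C oppr_lt0 Cmu.1.
have [s [s_gt0 ge0 [S0 S0D S00]]] := ratio_test Dw.1 neg.
have s_lt1 : s < 1.
  case/properP: CD => _ [S2 S2D S2C].
  have [i iS2] : exists i, i \in S2 by apply/set0Pn; apply: contraNneq D0 => <-.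
  rewrite -subr_gt0 -mulrN1 -(shifted_sum s i Dw mu'_sum) (bigD1 S2) ?S2D ?iS2 //=.
  rewrite {1}/mu' (negbTE S2C) oppr0 mulr0 addr0 ltr_pwDl ?Dw.1 //.
  by apply: sumr_ge0 => S /andP[/andP[SD _] _]; apply: ge0.
pose w2 S := (w S + s * - mu' S) / (1 - s).
exists s, w2, [set S in D | w S + s * - mu' S != 0]; split.
- by rewrite s_gt0 s_lt1.
- apply/properP; split; first by apply/subsetP => S; rewrite inE => /andP[].
  by exists S0; rewrite // inE S0D S00 eqxx.
- move: (balancing_shift (s := s) Dw mu'_sum).
  by rewrite mulrN1 subr_gt0 => /(_ s_lt1 ge0).
move=> g; rewrite -mu'_val sum_support => [|S fS0]; last by rewrite /w2 fS0 !mul0r.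
rewrite !mulr_sumr -big_split /=; apply: eq_bigr => S _.
by rewrite /w2; field; rewrite subr_eq0 gt_eqF.
Qed.

Lemma BG_balanced_le (v : game R n) D w : BG v -> set0 \notin D ->
  balancing_weights D w -> \sum_(S in D) w S * v S <= v [set: 'I_n].
Proof.
move=> [_ vBG]; have [k] := ubnP #|D|; elim: k D w => // k IH D w Dk D0 Dw.
have [[C CD [C0 [mu Cmu]]] | Dmin] :=
  classic (exists2 C : {set {set 'I_n}}, C \proper D & balanced R C).
  have [s [w2 [D' [/andP[s_gt0 s_lt1] D'D D'w2 ->]]]] := balanced_split D0 Dw CD Cmu.
  have D'0 : set0 \notin D' by apply: contra D0; apply: (subsetP (proper_sub D'D)).
  have le_D' := IH D' w2 (leq_trans (proper_card D'D) Dk) D'0 D'w2.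
  have le_C := IH C mu (leq_trans (proper_card CD) Dk) C0 Cmu.
  apply: (@le_trans _ _ ((1 - s) * v [set: 'I_n] + s * v [set: 'I_n])).
    by rewrite lerD // ler_wpM2l // ?subr_ge0 ltW.
  by rewrite -mulrDl subrK mul1r.
have Dmin' : minimal_balanced R D.
  by split=> [|C CD Cbal]; [split; last exists w | apply: Dmin; exists C].
have [DT | DT] := eqVneq D [set [set: 'I_n]]; last exact: vBG (conj Dmin' DT) Dw.
move: Dw; rewrite DT => -[_ /(_ (Ordinal n_gt0))].
by rewrite big_mkcondr !big_set1 in_setT => ->; rewrite mul1r.
Qed.

Lemma BG_le_payoff (v : game R n) D w x S0 : BG v -> set0 \notin D ->
  balancing_weights D w -> S0 \in D ->
  (forall S, S \in D -> S != S0 -> v S = \sum_(i in S) x i) ->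
  \sum_i x i = v [set: 'I_n] -> v S0 <= \sum_(i in S0) x i.
Proof.
move=> vBG D0 Dw S0D vx xN.
have := BG_balanced_le vBG D0 Dw.
rewrite -xN -(balancing_sum x Dw) -subr_le0 -sumrB (bigD1 S0) //=.
rewrite [X in _ + X]big1 => [|S /andP[SD SS0]]; last by rewrite vx ?subrr.
by rewrite addr0 -mulrBr pmulr_rle0 ?Dw.1 // subr_le0.
Qed.

(** * The incidence matrix of a collection *)

Definition incidence_mx B : 'M[R]_(#|B|, n) := \matrix_(k, i) chi (enum_val k) 0 i.

Lemma incidence_mxE B d k : (incidence_mx B *m d) k 0 = dot (chi (enum_val k)) d.
Proof. by rewrite /dot !mxE; apply: eq_bigr => i _; rewrite !mxE. Qed.

Lemma incidence_mx_ker B d T :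
  incidence_mx B *m d = 0 -> T \in B -> dot (chi T) d = 0.
Proof. by move=> Bd TB; rewrite -(enum_rankK_in TB TB) -incidence_mxE Bd mxE. Qed.

Lemma mul_incidence_mx B (u : 'rV_#|B|) : u *m incidence_mx B =
  \sum_(T in B) (\sum_(k | enum_val k == T) u 0 k) *: chi T.
Proof.
rewrite mulmx_sum_row [RHS]big_enum_val /=; apply: eq_bigr => k _.
rewrite (big_pred1 k) => [|j]; last by rewrite /= (inj_eq enum_val_inj).
by congr (_ *: _); apply/rowP => i; rewrite !mxE.
Qed.

Lemma sub_incidence_mx B r : (r <= incidence_mx B)%MS ->
  exists a : {set 'I_n} -> R, r = \sum_(T in B) a T *: chi T.
Proof. by case/submxP => u ->; eexists; apply: mul_incidence_mx. Qed.

Lemma minimal_balanced_row_free B :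
  minimal_balanced R B -> row_free (incidence_mx B).
Proof.
move=> Bmin; rewrite -kermx_eq0; apply/rowV0P => u /sub_kermxP.
rewrite mul_incidence_mx => /(minimal_balanced_free Bmin) u0.
apply/rowP => k; have := u0 _ (enum_valP k).
by rewrite (big_pred1 k) ?mxE // => j; rewrite /= (inj_eq enum_val_inj).
Qed.

Lemma card_minimal_balanced B : minimal_balanced R B -> (#|B| <= n)%N.
Proof. by move/minimal_balanced_row_free/eqP <-; apply: rank_leq_col. Qed.

Lemma kernel_neq0 m (M : 'M[R]_(m, n)) :
  (\rank M < n)%N -> exists2 d : 'cV_n, d != 0 & M *m d = 0.
Proof.
move=> rM; have : kermx M^T != 0.
  by rewrite -mxrank_eq0 mxrank_ker mxrank_tr subn_eq0 -ltnNge.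
case/rowV0Pn => u /sub_kermxP uM u0; exists u^T; first by rewrite trmx_eq0.
by rewrite -[M]trmxK -trmx_mul uM trmx0.
Qed.

Lemma exists_payoff B (f : {set 'I_n} -> R) : row_free (incidence_mx B) ->
  exists x, forall T, T \in B -> \sum_(i in T) x i = f T.
Proof.
case/row_freeP => P BP; pose xc := P *m \col_k f (enum_val k).
exists [ffun i => xc i 0] => T TB.
have := incidence_mxE xc (enum_rank_in TB T).
rewrite mulmxA BP mul1mx mxE enum_rankK_in // dot_chi => ->.
by apply: eq_bigr => i _; rewrite ffunE.
Qed.

Lemma payoff_inj B x y : row_full (incidence_mx B) ->
  (forall T, T \in B -> \sum_(i in T) x i = \sum_(i in T) y i) -> x = y.
Proof.
case/row_fullP => Q QB xy.
have : incidence_mx B *m \col_i x i = incidence_mx B *m \col_i y i.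
  by apply/colP => k; rewrite !incidence_mxE !dot_chi_col xy ?enum_valP.
move/(congr1 (mulmx Q)); rewrite !mulmxA QB !mul1mx => /colP xy'.
by apply/ffunP => i; move: (xy' i); rewrite !mxE.
Qed.

(** * A Gordan-type alternative *)

Section Alternative.
Variables (I : finType) (a : I -> 'rV[R]_n).

Definition kernel_certificate (W : {set I}) m (M : 'M[R]_(m, n)) (d : 'cV_n) :=
  [/\ d != 0, M *m d = 0 & forall k, k \in W -> 0 <= dot (a k) d].

Definition rowspace_certificate (W : {set I}) m (M : 'M[R]_(m, n)) nu :=
  [/\ forall k, 0 <= nu k, forall k, k \notin W -> nu k = 0,
      exists k, nu k != 0 & ((\sum_k nu k *: a k)%R <= M)%MS].

Lemma sub_col_mx_ge0 m (M : 'M[R]_(m, n)) r u d :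
  M *m d = 0 -> dot r d < 0 -> 0 <= dot u d -> (u <= col_mx M r)%MS ->
  exists2 c, 0 <= c & ((u + c *: r)%R <= M)%MS.
Proof.
move=> Md rd ud /submxP[D uD].
have {uD} uE : u = lsubmx D *m M + rsubmx D 0 0 *: r.
  rewrite uD -{1}[D]hsubmxK mul_row_col; congr (_ + _).
  by rewrite {1}[rsubmx D]mx11_scalar mul_scalar_mx.
move: ud; rewrite uE dotDl dot_mulmx_ker // add0r dotZl nmulr_lge0 // => c_le0.
by exists (- rsubmx D 0 0); rewrite ?oppr_ge0 // scaleNr addrK submxMl.
Qed.

Lemma rowspace_certificate_lift (W : {set I}) k0 m (M : 'M[R]_(m, n)) d0 nu :
  k0 \in W -> M *m d0 = 0 -> dot (a k0) d0 < 0 ->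
  (forall k, k \in W :\ k0 -> 0 <= dot (a k) d0) ->
  rowspace_certificate (W :\ k0) (col_mx M (a k0)) nu ->
  exists nu', rowspace_certificate W M nu'.
Proof.
move=> k0W Md0 k0d0 d0W0 [nu_ge0 nuW0 [k1 nu_k1] nuM'].
have nu_d0 : 0 <= dot (\sum_k nu k *: a k) d0.
  rewrite dot_suml sumr_ge0 // => k _.
  by have [/d0W0|/nuW0->] := boolP (k \in W :\ k0); [apply: mulr_ge0 | rewrite mul0r].
have [c c_ge0 cM] := sub_col_mx_ge0 Md0 k0d0 nu_d0 nuM'.
have k1k0 : k1 != k0 by apply: contraNneq nu_k1 => ->; rewrite nuW0 // !inE eqxx.
exists (fun k => nu k + (k == k0)%:R * c); split.
- by move=> k; rewrite addr_ge0 ?mulr_ge0.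
- move=> k kW; have kk0 : k != k0 by apply: contraNneq kW => ->.
  by rewrite (negbTE kk0) mul0r addr0 nuW0 // !inE (negbTE kW) andbF.
- by exists k1; rewrite (negbTE k1k0) mul0r addr0.
rewrite (eq_bigr (fun k => nu k *: a k + (k == k0)%:R *: (c *: a k))) => [|k _].
  by rewrite big_split /= sum_scale_delta.
by rewrite scalerDl scalerA.
Qed.

Lemma kernel_or_rowspace_certificate (W : {set I}) m (M : 'M[R]_(m, n)) :
  (\rank M < n)%N ->
  (exists d, kernel_certificate W M d) \/ (exists nu, rowspace_certificate W M nu).
Proof.
have [N] := ubnP #|W|; elim: N W m M => // N IH W m M WN rM.
have [W0 | [k0 k0W]] := set_0Vmem W.
  by left; have [d d0 Md] := kernel_neq0 rM; exists d; split=> // k; rewrite W0 inE.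
have W0N : (#|W :\ k0| < N)%N by rewrite (cardsD1 k0 W) k0W in WN.
have [[d0 [d0_neq0 Md0 d0W0]] | [nu [nu_ge0 nuW0 nu_neq0 nuM]]] := IH _ _ M W0N rM;
  last by right; exists nu; split=> // k kW; rewrite nuW0 // !inE (negbTE kW) andbF.
have [k0d0 | k0d0] := leP 0 (dot (a k0) d0).
  left; exists d0; split=> // k kW; have [-> // | kk0] := eqVneq k k0.
  by rewrite d0W0 // !inE kk0.
have lift := rowspace_certificate_lift k0W Md0 k0d0 d0W0.
have [rM' | M'full] := ltnP (\rank (col_mx M (a k0))) n.
  have [[d [d_neq0 M'd dW0]] | [nu /lift]] := IH _ _ _ W0N rM'; last by right.
  move: M'd; rewrite mul_col_mx => /eqP; rewrite col_mx_eq0 => /andP[/eqP Md /eqP k0d].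
  left; exists d; split=> // k kW; have [-> | kk0] := eqVneq k k0.
    by rewrite /dot k0d mxE.
  by rewrite dW0 // !inE kk0.
have [W00 | [k1 k1W0]] := set_0Vmem (W :\ k0).
  left; exists (- d0); split; rewrite ?oppr_eq0 ?mulmxN ?Md0 ?oppr0 // => k kW.
  have [-> | kk0] := eqVneq k k0; first by rewrite dotNr oppr_ge0 ltW.
  by move/setP: W00 => /(_ k); rewrite !inE kk0 kW.
right; apply: (lift (fun k => (k == k1)%:R)); split.
- by move=> k; rewrite ler0n.
- by move=> k kW0; case: eqVneq => // kk1; rewrite kk1 k1W0 in kW0.
- by exists k1; rewrite eqxx oner_eq0.
by rewrite sum_scale_delta submx_full // /row_full eqn_leq rank_leq_col.
Qed.

End Alternative.

(** * Cores of games on a facet *)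

Lemma in_core_tight (v : game R n) B lam y : balancing_weights B lam ->
  \sum_(S in B) lam S * v S = v [set: 'I_n] -> in_core v y ->
  forall T, T \in B -> \sum_(i in T) y i = v T.
Proof.
move=> Blam vB [ycore yN] T TB.
have ge0 S : S \in B -> 0 <= lam S * (\sum_(i in S) y i - v S).
  by move=> SB; rewrite mulr_ge0 ?subr_ge0 // ltW ?Blam.1.
have sum0 : \sum_(S in B) lam S * (\sum_(i in S) y i - v S) = 0.
  rewrite (eq_bigr _ (fun S _ => mulrBr _ _ _)) sumrB.
  by rewrite balancing_sum // vB -yN sum_setT subrr.
have /eqP := psumr_eq0P ge0 sum0 TB.
by rewrite mulf_eq0 gt_eqF ?Blam.1 //= subr_eq0 => /eqP.
Qed.

Lemma in_core_shift (v : game R n) x (d : {ffun 'I_n -> R}) : in_core v x ->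
  (forall S, v S = \sum_(i in S) x i -> 0 <= \sum_(i in S) d i) ->
  \sum_i d i = 0 -> exists2 e, 0 < e & in_core v [ffun i => x i + e * d i].
Proof.
move=> [xcore xN] d_ge0 dN.
(* Step size K^-1 is small enough for the slack of every non-tight coalition. *)
pose K := 1 + \sum_(S | v S < \sum_(i in S) x i)
                `|\sum_(i in S) d i| / (\sum_(i in S) x i - v S).
have K_ge S : v S < \sum_(i in S) x i ->
    `|\sum_(i in S) d i| / (\sum_(i in S) x i - v S) <= K.
  move=> vS; rewrite /K (bigD1 S) //= addrCA lerDl addr_ge0 // sumr_ge0 //.
  by move=> T /andP[vT _]; rewrite divr_ge0 ?normr_ge0 // ltW // subr_gt0.
have K_gt0 : 0 < K.
  rewrite ltr_pwDl // sumr_ge0 // => S vS.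
  by rewrite divr_ge0 ?normr_ge0 // ltW // subr_gt0.
exists K^-1; first by rewrite invr_gt0.
have yE S : \sum_(i in S) [ffun i => x i + K^-1 * d i] i =
    \sum_(i in S) x i + K^-1 * \sum_(i in S) d i.
  by rewrite mulr_sumr -big_split; apply: eq_bigr => i _; rewrite ffunE.
split=> [S|]; last by rewrite yE xN sum_setT dN mulr0 addr0.
rewrite yE; have [tight | slack] := eqVneq (v S) (\sum_(i in S) x i).
  by rewrite -tight lerDl mulr_ge0 ?invr_ge0 ?(ltW K_gt0) ?(d_ge0 _ tight).
have vS : v S < \sum_(i in S) x i by rewrite lt_neqAle slack xcore.
have := K_ge S vS; rewrite ler_pdivrMr ?subr_gt0 // -ler_pdivrMl // => bound.
rewrite -lerBlDl (@le_trans _ _ (- (K^-1 * `|\sum_(i in S) d i|))) //.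
  by rewrite lerNr opprB.
by rewrite -mulrN ler_wpM2l ?invr_ge0 ?(ltW K_gt0) // lerNl -normrN ler_norm.
Qed.

Definition bump (v : game R n) S0 (del : R) : game R n :=
  [ffun S => v S + (S == S0)%:R * del].

Lemma facet_bump_le0 (v : game R n) B lam S0 del : facet B lam v ->
  S0 \notin B -> S0 != set0 -> S0 != [set: 'I_n] -> del <= 0 ->
  facet B lam (bump v S0 del).
Proof.
move=> [[v0 vBG] vB] S0B S00 S0T del_le0.
have bumpE S : S != S0 -> bump v S0 del S = v S.
  by move=> SS0; rewrite ffunE (negbTE SS0) mul0r addr0.
split; first split.
- by rewrite bumpE // eq_sym.
- move=> C muC CB Cmu; rewrite bumpE 1?eq_sym //; apply: le_trans (vBG C muC CB Cmu).
  apply: ler_sum => S SC; rewrite ffunE ler_wpM2l ?(ltW (Cmu.1 _ SC)) //.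
  by rewrite gerDl mulr_ge0_le0.
- rewrite bumpE 1?eq_sym // -vB; apply: eq_bigr => S SB.
  by rewrite bumpE //; apply: contraNneq S0B => <-.
Qed.

Lemma facet_bump_relint (v : game R n) B lam S0 :
  rel_interior (facet B lam) v -> S0 \notin B -> S0 != set0 ->
  S0 != [set: 'I_n] -> exists2 del, 0 < del & facet B lam (bump v S0 del).
Proof.
move=> [Fv [eps [eps_gt0 epsF]]] S0B S00 S0T.
have del_gt0 : 0 < eps / 2 by rewrite divr_gt0.
exists (eps / 2) => //; apply: epsF => [|S].
  exists 2%N, (fun k : 'I_2 => if k == ord0 then 2 else -1),
    (fun k : 'I_2 => if k == ord0 then v else bump v S0 (- (eps / 2))).
  split; [|split].
  - by move=> k; case: ifP => _ //; apply: facet_bump_le0; rewrite // oppr_le0 ltW.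
  - by rewrite big_ord_recl big_ord1 /=; ring.
  - by move=> S; rewrite big_ord_recl big_ord1 /= !ffunE; ring.
rewrite ffunE addrC addKr normrM; case: eqP => _; rewrite ?normr0 ?mul0r //.
by rewrite normr1 mul1r gtr0_norm // ltr_pdivrMr // ltr_pMr // ltr1n.
Qed.

Lemma relint_core_slack (v : game R n) B lam x D wD S0 :
  rel_interior (facet B lam) v -> balancing_weights B lam -> in_core v x ->
  set0 \notin D -> balancing_weights D wD -> S0 \in D -> S0 \notin B ->
  S0 != [set: 'I_n] ->
  (forall S, S \in D -> S \notin B -> S != S0 -> v S = \sum_(i in S) x i) ->
  v S0 < \sum_(i in S0) x i.
Proof.
move=> vF Blam xcore D0 Dw S0D S0B S0T Dtight.
have S00 : S0 != set0 by apply: contraNneq D0 => <-.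
have [del del_gt0 [wBG _]] := facet_bump_relint vF S0B S00 S0T.
have [[_ _] vB] := vF.1.
have wx S : S \in D -> S != S0 -> bump v S0 del S = \sum_(i in S) x i.
  move=> SD SS0; rewrite ffunE (negbTE SS0) mul0r addr0.
  have [SB | SnB] := boolP (S \in B); last exact: Dtight.
  by rewrite (in_core_tight Blam vB xcore SB).
have wN : \sum_i x i = bump v S0 del [set: 'I_n].
  by rewrite ffunE eq_sym (negbTE S0T) mul0r addr0 -xcore.2 sum_setT.
have := BG_le_payoff wBG D0 Dw S0D wx wN.
by rewrite ffunE eqxx mul1r; apply: lt_le_trans; rewrite ltrDl.
Qed.

Lemma facet_core_single_point (v : game R n) B lam :
  Bstar R B -> balancing_weights B lam -> #|B| = n -> facet B lam v ->
  core_single_point v.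
Proof.
move=> [Bmin _] Blam cardB [vBG vB].
have Bfree := minimal_balanced_row_free Bmin.
have Bfull : row_full (incidence_mx B) by rewrite /row_full (eqP Bfree) cardB.
have [x xB] := exists_payoff v Bfree.
have xN : \sum_i x i = v [set: 'I_n].
  by rewrite -(balancing_sum x Blam) -vB; apply: eq_bigr => S SB; rewrite xB.
have xcore : in_core v x.
  split=> [S|]; last by rewrite sum_setT.
  have [-> | S0] := eqVneq S set0; first by rewrite big_set0 vBG.1.
  have [SB | SnB] := boolP (S \in B); first by rewrite xB.
  have [a Sa] := sub_incidence_mx (submx_full (chi S) Bfull).
  have SB1 : [disjoint [set S] & B] by rewrite disjoints1.
  have Sa1 : \sum_(T in [set S]) 1 *: chi T = \sum_(T in B) a T *: chi T.
    by rewrite big_set1 scale1r.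
  have [wD Dw] := balanced_extension Blam SB1 (fun _ _ => ltr01) Sa1.
  apply: (BG_le_payoff vBG _ Dw) => //; last 2 first.
  - by rewrite !inE eqxx.
  - by move=> T; rewrite !inE => /orP[/eqP-> /eqP // | TB _]; rewrite xB.
  by rewrite !inE negb_or eq_sym S0; case: Bmin => -[].
exists x => y; split=> [ycore | ->] //.
by apply: (payoff_inj Bfull) => T TB; rewrite xB // (in_core_tight Blam vB ycore TB).
Qed.

Definition tight_outside (v : game R n) x B :=
  [set S | [&& S \notin B, S != set0, S != [set: 'I_n] & v S == \sum_(i in S) x i]].

Lemma kernel_certificate_core (v : game R n) B lam x d :
  balancing_weights B lam -> in_core v x ->
  kernel_certificate chi (tight_outside v x B) (incidence_mx B) d ->
  exists2 y, in_core v y & y != x.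
Proof.
move=> Blam xcore [d_neq0 Bd dW].
have dN : dot (chi [set: 'I_n]) d = 0.
  rewrite -(balancing_chi Blam) dot_suml big1 // => T TB.
  by rewrite (incidence_mx_ker Bd TB) mulr0.
have dE S : \sum_(i in S) [ffun i => d i 0] i = dot (chi S) d.
  by rewrite dot_chi; apply: eq_bigr => i _; rewrite ffunE.
have d_ge0 S : v S = \sum_(i in S) x i -> 0 <= \sum_(i in S) [ffun i => d i 0] i.
  move=> vS; rewrite dE; have [SB | SnB] := boolP (S \in B).
    by rewrite (incidence_mx_ker Bd SB).
  have [-> | S0] := eqVneq S set0; first by rewrite dot_chi big_set0.
  have [-> | ST] := eqVneq S [set: 'I_n]; first by rewrite dN.
  by apply: dW; rewrite inE SnB S0 ST vS eqxx.
have dsum : \sum_i [ffun i => d i 0] i = 0 by rewrite -sum_setT dE dN.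
have [e e_gt0 ycore] := in_core_shift xcore d_ge0 dsum.
exists [ffun i => x i + e * [ffun i => d i 0] i] => //.
apply: contra d_neq0 => /eqP/ffunP y_x; apply/eqP/colP => i.
move: (y_x i); rewrite !ffunE mxE -{2}[x i]addr0 => /addrI/eqP.
by rewrite mulf_eq0 gt_eqF //= => /eqP.
Qed.

Lemma rowspace_certificate_relint (v : game R n) B lam x mu :
  set0 \notin B -> balancing_weights B lam -> rel_interior (facet B lam) v ->
  in_core v x -> ~ rowspace_certificate chi (tight_outside v x B) (incidence_mx B) mu.
Proof.
move=> B0 Blam vF xcore [mu_ge0 muW [S0 muS0] muB].
pose Wp := [set S | mu S != 0].
have WpW S : S \in Wp -> S \in tight_outside v x B.
  by rewrite inE; apply: contraR => /muW ->; rewrite eqxx.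
have [a muBa] := sub_incidence_mx muB.
have muWp : \sum_(S in Wp) mu S *: chi S = \sum_(T in B) a T *: chi T.
  rewrite -muBa big_mkcond /=; apply: eq_bigr => S _.
  by rewrite inE; case: eqP => // ->; rewrite scale0r.
have WpB : [disjoint Wp & B].
  by rewrite disjoint_subset; apply/subsetP => S /WpW; rewrite !inE => /and4P[].
have mu_gt0 S : S \in Wp -> 0 < mu S by rewrite inE lt_def => ->; rewrite mu_ge0.
have [wD Dw] := balanced_extension Blam WpB mu_gt0 muWp.
have S0Wp : S0 \in Wp by rewrite inE.
have := WpW _ S0Wp; rewrite inE => /and4P[S0B _ S0T /eqP vS0].
have D0 : set0 \notin Wp :|: B.
  by rewrite in_setU negb_or B0 andbT; apply/negP => /WpW; rewrite inE eqxx /= andbF.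
have Dtight S : S \in Wp :|: B -> S \notin B -> S != S0 -> v S = \sum_(i in S) x i.
  by rewrite in_setU => /orP[/WpW | -> //]; rewrite inE => /and4P[_ _ _ /eqP].
have := relint_core_slack vF Blam xcore D0 Dw _ S0B S0T Dtight.
by rewrite in_setU S0Wp vS0 ltxx => /(_ isT).
Qed.

Lemma relint_facet_not_core_single_point (v : game R n) B lam :
  Bstar R B -> balancing_weights B lam -> #|B| <> n ->
  rel_interior (facet B lam) v -> ~ core_single_point v.
Proof.
move=> [Bmin _] Blam cardB vF [x x_uniq].
have xcore : in_core v x by apply/x_uniq.
have rB : (\rank (incidence_mx B) < n)%N.
  rewrite (leq_ltn_trans (rank_leq_row _)) // ltn_neqAle.
  by rewrite card_minimal_balanced // andbT; apply/eqP.
have [[d d_cert] | [mu mu_cert]] :=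
  kernel_or_rowspace_certificate chi (tight_outside v x B) rB.
  by have [y /x_uniq ->] := kernel_certificate_core Blam xcore d_cert; rewrite eqxx.
by apply: (rowspace_certificate_relint _ Blam vF xcore mu_cert); case: Bmin => -[].
Qed.

End BalancedGames.

Theorem theorem17 (R : realFieldType) (n : nat) (B : {set {set 'I_n}})
  (lam : {set 'I_n} -> R) :
  (0 < n)%N -> Bstar R B -> balancing_weights B lam ->
  (#|B| = n -> forall v : game R n, facet B lam v -> core_single_point v) /\
  (#|B| <> n -> forall v : game R n,
      rel_interior (facet B lam) v -> ~ core_single_point v).
Proof.
move=> n_gt0 BB Blam; split=> cardB v.
  exact: facet_core_single_point.
exact: relint_facet_not_core_single_point.
Qed.
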